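(* Let $X$ be a Tychonoff space and let $G(X)$ denote either $F(X)$ or $A(X)$. Then $G(X)$ has countable fan-tightness if and only if $X$ is discrete. *)

From Stdlib Require Import Reals List.
Open Scope R_scope.

Record TopSpace := {
  pt :> Type;
  is_open : (pt -> Prop) -> Prop;
  open_total : is_open (fun _ => True);
  open_inter : forall U V, is_open U -> is_open V -> is_open (fun x => U x /\ V x);
  open_union : forall F : (pt -> Prop) -> Prop,
      (forall U, F U -> is_open U) -> is_open (fun x => exists U, F U /\ U x)
}.
Arguments is_open {_} _.

Definition is_closed {X : TopSpace} (C : X -> Prop) : Prop :=
  is_open (fun x => ~ C x).

Definition in_closure {X : TopSpace} (S : X -> Prop) (x : X) : Prop :=
  forall U, is_open U -> U x -> exists y, U y /\ S y.

Definition continuous {X Y : TopSpace} (f : X -> Y) : Prop :=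
  forall V : Y -> Prop, is_open V -> is_open (fun x => V (f x)).

Definition continuous_R {X : TopSpace} (f : X -> R) : Prop :=
  forall (x : X) (eps : R), 0 < eps ->
    exists U, is_open U /\ U x /\ forall y, U y -> Rabs (f y - f x) < eps.

Definition discrete (X : TopSpace) : Prop := forall U : X -> Prop, is_open U.

Definition tychonoff (X : TopSpace) : Prop :=
  (forall x : X, is_closed (fun y => y = x)) /\
  (forall (C : X -> Prop) (x : X), is_closed C -> ~ C x ->
     exists f : X -> R, continuous_R f /\ f x = 0 /\
       (forall y, C y -> f y = 1) /\ (forall y, 0 <= f y <= 1)).

Definition countable_fan_tightness (X : TopSpace) : Prop :=
  forall (x : X) (A : nat -> X -> Prop),
    (forall n, in_closure (A n) x) ->
    exists F : nat -> list X,
      (forall n y, In y (F n) -> A n y) /\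
      in_closure (fun y => exists n, In y (F n)) x.

Record TopGroup := {
  tg_space :> TopSpace;
  mul : tg_space -> tg_space -> tg_space;
  inv : tg_space -> tg_space;
  one : tg_space;
  mulA : forall a b c, mul a (mul b c) = mul (mul a b) c;
  mul1g : forall a, mul one a = a;
  mulVg : forall a, mul (inv a) a = one;
  mul_cont : forall (x y : tg_space) (W : tg_space -> Prop),
      is_open W -> W (mul x y) ->
      exists U V, is_open U /\ is_open V /\ U x /\ V y /\
        forall a b, U a -> V b -> W (mul a b);
  inv_cont : continuous inv
}.
Arguments mul {_} _ _.
Arguments inv {_} _.
Arguments one {_}.

Definition abelian (G : TopGroup) : Prop := forall a b : G, mul a b = mul b a.

Definition group_hom {G H : TopGroup} (phi : G -> H) : Prop :=
  forall a b : G, phi (mul a b) = mul (phi a) (phi b).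

Definition is_free_topological_group (X : TopSpace) (G : TopGroup) (i : X -> G) : Prop :=
  continuous i /\
  forall (H : TopGroup) (f : X -> H), continuous f ->
    exists phi : G -> H,
      group_hom phi /\ continuous phi /\ (forall x, phi (i x) = f x) /\
      (forall psi : G -> H, group_hom psi -> continuous psi ->
         (forall x, psi (i x) = f x) -> forall g, psi g = phi g).

Definition is_free_abelian_topological_group (X : TopSpace) (G : TopGroup) (i : X -> G) : Prop :=
  abelian G /\ continuous i /\
  forall (H : TopGroup) (f : X -> H), abelian H -> continuous f ->
    exists phi : G -> H,
      group_hom phi /\ continuous phi /\ (forall x, phi (i x) = f x) /\
      (forall psi : G -> H, group_hom psi -> continuous psi ->
         (forall x, psi (i x) = f x) -> forall g, psi g = phi g).

(** If X is discrete, the universal property applied to the identity of X into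
    the discrete copy of G shows that G itself is discrete, and a discrete space
    trivially has countable fan-tightness.

    If x is not isolated, 1 lies in the closure of every
    A_n = { (x^-1 y)^(n+1) : y <> x }.  Given finite F_n included in A_n,
    complete regularity yields f_n : X -> [0,1] with f_n x = 0 and f_n = 1 at the
    finitely many y used to write F_n.  The map y |-> (f_n y / (n+1))_n into R^N
    with the uniform topology is continuous; its homomorphic extension has n-th
    coordinate (n+1) (f_n y - f_n x) / (n+1) = 1 on F_n, so the preimage of the
    unit ball is a neighbourhood of 1 missing every F_n.

    Only the universal property against abelian targets (R^N, discrete copies of
    abelian groups) is used, so the argument covers F(X) and A(X) at once. *)
From Stdlib Require Import Reals List Lra Lia.
From Stdlib Require Import FunctionalExtensionality PropExtensionality.
From Stdlib Require Import IndefiniteDescription Classical.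
Open Scope R_scope.

Lemma pred_ext {T : Type} (P Q : T -> Prop) : (forall x, P x <-> Q x) -> P = Q.
Proof.
  intros H; apply functional_extensionality; intros x.
  apply propositional_extensionality; auto.
Qed.

Lemma open_of_locally_open (X : TopSpace) (S : X -> Prop) :
  (forall y, S y -> exists U, is_open U /\ U y /\ forall z, U z -> S z) -> is_open S.
Proof.
  intros H.
  replace S with (fun x => exists U, (is_open U /\ forall z, U z -> S z) /\ U x).
  - apply open_union; intros U [HU _]; exact HU.
  - apply pred_ext; intros x; split.
    + intros [U [[_ HS] Ux]]; auto.
    + intros Sx; destruct (H x Sx) as [U [HU [Ux HS]]]; exists U; auto.
Qed.

Lemma not_discrete_nonisolated (X : TopSpace) : ~ discrete X ->
  exists x : X, forall V, is_open V -> V x -> exists y, V y /\ y <> x.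
Proof.
  intros Hnd; apply NNPP; intros Hiso; apply Hnd; intros U.
  apply open_of_locally_open; intros y Uy.
  destruct (classic (exists V, is_open V /\ V y /\ forall z, V z -> z = y))
    as [[V [HV [Vy Hsing]]] | Hno].
  - exists V; repeat split; auto; intros z Vz; rewrite (Hsing z Vz); auto.
  - exfalso; apply Hiso; exists y; intros V HV Vy.
    apply NNPP; intros Hne; apply Hno; exists V; repeat split; auto.
    intros z Vz; apply NNPP; intros Hzy; apply Hne; exists z; auto.
Qed.

Lemma discrete_countable_fan_tightness (Y : TopSpace) :
  discrete Y -> countable_fan_tightness Y.
Proof.
  intros Hd y A HA; exists (fun _ => y :: nil); split.
  - intros n z [<- | []].
    destruct (HA n (fun z => z = y) (Hd _) eq_refl) as [z [-> Az]]; exact Az.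
  - intros U _ Uy; exists y; split; auto; exists 0%nat; left; reflexivity.
Qed.

Lemma list_closed (X : TopSpace) (hT1 : forall x : X, is_closed (fun y => y = x))
  (ys : list X) : is_closed (fun z => In z ys).
Proof.
  induction ys as [|a ys IH]; unfold is_closed in *.
  - replace (fun z : X => ~ In z nil) with (fun _ : X => True); [apply open_total|].
    apply pred_ext; simpl; tauto.
  - replace (fun z => ~ In z (a :: ys)) with (fun z => ~ z = a /\ ~ In z ys).
    + apply open_inter; auto; apply hT1.
    + apply pred_ext; intros z; simpl; split; [intros [Hza Hz] [H | H]; auto|].
      intros H; split; intros ?; apply H; auto.
Qed.

Lemma tychonoff_separates_list (X : TopSpace) (hX : tychonoff X) (x : X) (ys : list X) :
  ~ In x ys ->
  exists f : X -> R, continuous_R f /\ f x = 0 /\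
    (forall y, In y ys -> f y = 1) /\ (forall y, 0 <= f y <= 1).
Proof.
  destruct hX as [hT1 hCR]; intros Hx.
  exact (hCR _ x (list_closed X hT1 ys) Hx).
Qed.

Lemma list_choice {A B : Type} (R : A -> B -> Prop) (l : list A) :
  (forall a, In a l -> exists b, R a b) ->
  exists l' : list B, (forall a, In a l -> exists b, In b l' /\ R a b) /\
    (forall b, In b l' -> exists a, In a l /\ R a b).
Proof.
  induction l as [|a l IH]; intros H.
  - exists nil; split; simpl; tauto.
  - destruct (H a (or_introl eq_refl)) as [b Rab].
    destruct IH as [l' [H1 H2]]; [intros; apply H; right; auto|].
    exists (b :: l'); split.
    + intros a' [<- | Ha']; [exists b; simpl; auto|].
      destruct (H1 a' Ha') as [b' [Hb' R']]; exists b'; simpl; auto.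
    + intros b' [<- | Hb']; [exists a; simpl; auto|].
      destruct (H2 b' Hb') as [a' [Ha' R']]; exists a'; simpl; auto.
Qed.

Lemma continuous_R_finite_nbhd (X : TopSpace) (f : nat -> X -> R)
  (hf : forall k, continuous_R (f k)) (y0 : X) (eps : R) (N : nat) :
  0 < eps -> exists U, is_open U /\ U y0 /\
    forall z, U z -> forall k, (k < N)%nat -> Rabs (f k z - f k y0) < eps.
Proof.
  intros He; induction N as [|N [U [HU [Uy HUz]]]].
  - exists (fun _ => True); split; [apply open_total|]; split; auto; intros; lia.
  - destruct (hf N y0 eps He) as [U' [HU' [U'y HU'z]]].
    exists (fun z => U z /\ U' z); split; [apply open_inter; auto|]; split; auto.
    intros z [Uz U'z] k Hk.
    destruct (Nat.eq_dec k N) as [-> | Hne]; auto.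
    apply HUz; auto; lia.
Qed.

Lemma Rabs_div_diff_le (a b c : R) : 1 <= c -> 0 <= a <= 1 -> 0 <= b <= 1 ->
  Rabs (a / c - b / c) <= Rabs (a - b) /\ Rabs (a / c - b / c) <= / c.
Proof.
  intros Hc Ha Hb.
  replace (a / c - b / c) with ((a - b) * / c) by (field; lra).
  assert (Hi : 0 < / c) by (apply Rinv_0_lt_compat; lra).
  rewrite Rabs_mult, (Rabs_pos_eq (/ c)) by lra.
  assert (Hic : / c * c = 1) by (field; lra).
  assert (Hab : Rabs (a - b) <= 1) by (apply Rabs_le; lra).
  pose proof (Rabs_pos (a - b)); split; nra.
Qed.

(** * The group R^N with the uniform topology *)

Definition sup_ball (g : nat -> R) (r : R) (h : nat -> R) : Prop :=
  exists d, d < r /\ forall k, Rabs (h k - g k) <= d.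

Definition sup_open (U : (nat -> R) -> Prop) : Prop :=
  forall g, U g -> exists eps, 0 < eps /\ forall h, sup_ball g eps h -> U h.

Lemma sup_ball_open (g : nat -> R) (r : R) : sup_open (sup_ball g r).
Proof.
  intros h [d [Hd Hk]]; exists (r - d); split; [lra|].
  intros h' [d' [Hd' Hk']]; exists (d' + d); split; [lra|].
  intros k; specialize (Hk k); specialize (Hk' k).
  replace (h' k - g k) with ((h' k - h k) + (h k - g k)) by ring.
  eapply Rle_trans; [apply Rabs_triang | lra].
Qed.

Lemma sup_ball_center (g : nat -> R) (r : R) : 0 < r -> sup_ball g r g.
Proof.
  intros Hr; exists 0; split; auto; intros k.
  rewrite Rminus_diag, Rabs_R0; lra.
Qed.

Definition sup_space : TopSpace.
Proof.
  refine {| pt := nat -> R; is_open := sup_open |}.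
  - intros g _; exists 1; split; auto; lra.
  - intros U V HU HV g [Ug Vg].
    destruct (HU g Ug) as [e1 [He1 H1]]; destruct (HV g Vg) as [e2 [He2 H2]].
    exists (Rmin e1 e2); split; [apply Rmin_glb_lt; auto|].
    intros h [d [Hd Hk]]; split; [apply H1 | apply H2]; exists d; split; auto;
      eapply Rlt_le_trans; eauto; [apply Rmin_l | apply Rmin_r].
  - intros F HF g [U [FU Ug]]; destruct (HF U FU g Ug) as [e [He H]].
    exists e; split; auto; intros h Hh; exists U; auto.
Defined.

Definition sup_group : TopGroup.
Proof.
  refine {| tg_space := sup_space; mul := fun a b k => a k + b k;
            inv := fun a k => - a k; one := fun _ => 0 |};
    try (intros; apply functional_extensionality; intros; simpl; ring).
  - intros x y W HW Wxy; destruct (HW _ Wxy) as [e [He H]].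
    exists (sup_ball x (e / 2)), (sup_ball y (e / 2)).
    repeat split; try apply sup_ball_open; try (apply sup_ball_center; lra).
    intros a b [d1 [Hd1 Ha]] [d2 [Hd2 Hb]]; apply H; exists (d1 + d2); split; [lra|].
    intros k; specialize (Ha k); specialize (Hb k).
    replace (a k + b k - (x k + y k)) with ((a k - x k) + (b k - y k)) by ring.
    eapply Rle_trans; [apply Rabs_triang | lra].
  - intros V HV g Vg; destruct (HV _ Vg) as [e [He H]]; exists e; split; auto.
    intros h [d [Hd Hk]]; apply H; exists d; split; auto; intros k.
    replace (- h k - - g k) with (- (h k - g k)) by ring.
    rewrite Rabs_Ropp; auto.
Defined.

Lemma sup_group_abelian : abelian sup_group.
Proof. intros a b; apply functional_extensionality; intros k; simpl; ring. Qed.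

Definition discrete_space (T : Type) : TopSpace.
Proof. refine {| pt := T; is_open := fun _ => True |}; auto. Defined.

Definition discretize (G : TopGroup) : TopGroup.
Proof.
  refine {| tg_space := discrete_space G;
            mul := @mul G; inv := @inv G; one := @one G |}.
  - exact (mulA G).
  - exact (mul1g G).
  - exact (mulVg G).
  - intros x y W _ HW; exists (fun a => a = x), (fun b => b = y).
    repeat split; auto; intros a b -> ->; auto.
  - intros V _; exact I.
Defined.

Fixpoint gpow {G : TopGroup} (g : G) (n : nat) : G :=
  match n with O => one | S m => mul g (gpow g m) end.

Lemma gpow_one (G : TopGroup) (n : nat) : gpow (@one G) n = one.
Proof. induction n as [|n IH]; simpl; auto; rewrite IH; apply mul1g. Qed.

Lemma gpow_continuous (G : TopGroup) (n : nat) (g0 : G) (W : G -> Prop) :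
  is_open W -> W (gpow g0 n) ->
  exists U, is_open U /\ U g0 /\ forall g, U g -> W (gpow g n).
Proof.
  revert g0 W; induction n as [|n IH]; intros g0 W HW Wg.
  - exists (fun _ => True); split; [apply open_total|]; split; auto.
  - destruct (mul_cont G _ _ W HW Wg) as [U1 [V [HU1 [HV [U1g [Vg Hm]]]]]].
    destruct (IH g0 V HV Vg) as [U2 [HU2 [U2g H2]]].
    exists (fun g => U1 g /\ U2 g); split; [apply open_inter; auto|]; split; auto.
    intros g [? ?]; simpl; apply Hm; auto.
Qed.

Lemma gpow_mull_continuous (G : TopGroup) (c : G) (n : nat) (g0 : G) (W : G -> Prop) :
  is_open W -> W (gpow (mul c g0) n) ->
  exists U, is_open U /\ U g0 /\ forall g, U g -> W (gpow (mul c g) n).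
Proof.
  intros HW Wg; destruct (gpow_continuous G n _ W HW Wg) as [U0 [HU0 [U0g H0]]].
  destruct (mul_cont G _ _ U0 HU0 U0g) as [U1 [V [HU1 [HV [U1c [Vg Hm]]]]]].
  exists V; repeat split; auto.
Qed.

Section SupHom.
Variables (G : TopGroup) (phi : G -> sup_group).
Hypothesis phi_hom : group_hom phi.

Lemma sup_hom_mul (a b : G) (k : nat) : phi (mul a b) k = phi a k + phi b k.
Proof. exact (f_equal (fun h : nat -> R => h k) (phi_hom a b)). Qed.

Lemma sup_hom_one (k : nat) : phi one k = 0.
Proof. pose proof (sup_hom_mul one one k) as E; rewrite mul1g in E; lra. Qed.

Lemma sup_hom_inv (a : G) (k : nat) : phi (inv a) k = - phi a k.
Proof.
  pose proof (sup_hom_mul (inv a) a k) as E.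
  rewrite mulVg, sup_hom_one in E; lra.
Qed.

Lemma sup_hom_gpow_quotient (a b : G) (m k : nat) :
  phi (gpow (mul (inv a) b) m) k = INR m * (phi b k - phi a k).
Proof.
  induction m as [|m IH]; simpl gpow.
  - rewrite sup_hom_one; simpl; ring.
  - rewrite sup_hom_mul, IH, sup_hom_mul, sup_hom_inv, S_INR; ring.
Qed.

End SupHom.

(** Universality against the groups satisfying [P]: [P := fun _ => True] gives
    F(X), [P := abelian] gives A(X). *)
Definition universal_for (P : TopGroup -> Prop) (X : TopSpace) (G : TopGroup)
  (i : X -> G) : Prop :=
  continuous i /\
  forall (H : TopGroup) (f : X -> H), P H -> continuous f ->
    exists phi : G -> H,
      group_hom phi /\ continuous phi /\ (forall x, phi (i x) = f x) /\
      (forall psi : G -> H, group_hom psi -> continuous psi ->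
         (forall x, psi (i x) = f x) -> forall g, psi g = phi g).

Lemma universal_discrete (P : TopGroup -> Prop) (X : TopSpace) (G : TopGroup)
  (i : X -> G) :
  (forall H, P H -> P (discretize H)) -> P G -> universal_for P X G i ->
  discrete X -> discrete G.
Proof.
  intros Pdisc PG [ci univ] Hd U.
  destruct (univ (discretize G) i (Pdisc G PG)) as [phi [Hh [Hc [Hi _]]]].
  { intros V _; apply Hd. }
  destruct (univ G i PG ci) as [phi0 [_ [_ [_ Huniq]]]].
  assert (Hid : forall g, phi g = g).
  { intros g; rewrite (Huniq phi Hh), (Huniq (fun g => g)); auto.
    - intros a b; reflexivity.
    - intros V HV; exact HV.
    - intros V _; apply (Hc V I). }
  replace U with (fun g => U (phi g)); [apply (Hc U I)|].
  apply pred_ext; intros g; rewrite Hid; tauto.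
Qed.

Section NonIsolated.
Variables (X : TopSpace) (G : TopGroup) (i : X -> G) (x : X).
Hypothesis i_cont : continuous i.
Hypothesis x_nonisolated : forall V, is_open V -> V x -> exists y, V y /\ y <> x.

Definition quotient_power (n : nat) (y : X) : G := gpow (mul (inv (i x)) (i y)) (S n).

Lemma one_in_closure_quotient_powers (n : nat) :
  in_closure (fun g => exists y, y <> x /\ g = quotient_power n y) one.
Proof.
  intros W HW Wone.
  rewrite <- (gpow_one G (S n)), <- (mulVg G (i x)) in Wone.
  destruct (gpow_mull_continuous G _ _ _ W HW Wone) as [U [HU [Ux HUg]]].
  destruct (x_nonisolated (fun z => U (i z)) (i_cont U HU) Ux) as [y [Uy Hyx]].
  exists (quotient_power n y); split; [apply HUg; auto | exists y; auto].
Qed.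

End NonIsolated.

Lemma separating_functions (X : TopSpace) (hX : tychonoff X) (x : X) (T : Type)
  (w : nat -> X -> T) (F : nat -> list T) :
  (forall n t, In t (F n) -> exists y, y <> x /\ t = w n y) ->
  exists f : nat -> X -> R,
    (forall n, continuous_R (f n)) /\ (forall n, f n x = 0) /\
    (forall n z, 0 <= f n z <= 1) /\
    (forall n t, In t (F n) -> exists y, t = w n y /\ f n y = 1).
Proof.
  intros HF.
  assert (Hn : forall n, exists f : X -> R, continuous_R f /\ f x = 0 /\
            (forall z, 0 <= f z <= 1) /\
            (forall t, In t (F n) -> exists y, t = w n y /\ f y = 1)).
  { intros n.
    destruct (list_choice (fun t y => y <> x /\ t = w n y) (F n) (HF n))
      as [ys [Hcover Hys]].
    destruct (tychonoff_separates_list X hX x ys) as [f [fc [fx [f1 fb]]]].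
    { intros Hin; destruct (Hys x Hin) as [t [_ [Hxx _]]]; auto. }
    exists f; repeat split; auto; try apply fb.
    intros t Ht; destruct (Hcover t Ht) as [y [Hy [_ Hty]]]; exists y; auto. }
  destruct (functional_choice _ Hn) as [f Hf].
  exists f; repeat split; intros; apply Hf; auto.
Qed.

Lemma scaled_family_continuous (X : TopSpace) (f : nat -> X -> R)
  (hf : forall k, continuous_R (f k)) (hb : forall k z, 0 <= f k z <= 1) :
  @continuous X sup_group (fun y k => f k y / INR (S k)).
Proof.
  intros V HV; apply open_of_locally_open; intros y0 Vy0.
  destruct (HV _ Vy0) as [eps [He Hsub]].
  destruct (INR_unbounded (2 / eps)) as [N HN].
  destruct (continuous_R_finite_nbhd X f hf y0 (eps / 2) N ltac:(lra))
    as [U [HU [Uy HUz]]].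
  exists U; repeat split; auto; intros z Uz; apply Hsub.
  exists (eps / 2); split; [lra|]; intros k.
  assert (Hk1 : 1 <= INR (S k)) by (rewrite S_INR; pose proof (pos_INR k); lra).
  destruct (Rabs_div_diff_le _ _ _ Hk1 (hb k z) (hb k y0)) as [Bnear Btail].
  destruct (Nat.lt_ge_cases k N) as [Hlt | Hge].
  - specialize (HUz z Uz k Hlt); lra.
  - assert (HSN : INR (S N) <= INR (S k)) by (apply le_INR; lia).
    assert (HN2 : 2 / eps < INR (S N)) by (rewrite S_INR; lra).
    assert (0 < 2 / eps) by (apply Rdiv_lt_0_compat; lra).
    eapply Rle_trans; [exact Btail|].
    apply Rle_trans with (/ (2 / eps)); [apply Rinv_le_contravar; lra | right; field; lra].
Qed.

Lemma universal_not_fan_tight (P : TopGroup -> Prop) (X : TopSpace) (hX : tychonoff X)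
  (G : TopGroup) (i : X -> G) :
  P sup_group -> universal_for P X G i -> ~ discrete X -> ~ countable_fan_tightness G.
Proof.
  intros Psup [ci univ] Hnd cft.
  destruct (not_discrete_nonisolated X Hnd) as [x Hx].
  destruct (cft one _ (one_in_closure_quotient_powers X G i x ci Hx)) as [F [HFA HFcl]].
  destruct (separating_functions X hX x _ (quotient_power X G i x) F HFA)
    as [f [fc [fx [fb f1]]]].
  destruct (univ sup_group (fun y k => f k y / INR (S k)) Psup
              (scaled_family_continuous X f fc fb)) as [phi [Hh [Hc [Hi _]]]].
  destruct (HFcl (fun g => sup_ball (fun _ => 0) 1 (phi g)))
    as [g [[d [Hd Hball]] [n Hn]]].
  - apply Hc, sup_ball_open.
  - exists 0; split; [lra|]; intros k.
    rewrite (sup_hom_one G phi Hh), Rminus_diag, Rabs_R0; lra.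
  - destruct (f1 n g Hn) as [y [-> fy]].
    specialize (Hball n); unfold quotient_power in Hball.
    rewrite (sup_hom_gpow_quotient G phi Hh), !Hi, fx, fy in Hball.
    replace (INR (S n) * (1 / INR (S n) - 0 / INR (S n)) - 0) with 1 in Hball
      by (field; apply not_0_INR; lia).
    rewrite Rabs_R1 in Hball; lra.
Qed.

Lemma universal_fan_tightness_iff (P : TopGroup -> Prop) (X : TopSpace)
  (hX : tychonoff X) (G : TopGroup) (i : X -> G) :
  P sup_group -> (forall H, P H -> P (discretize H)) -> P G ->
  universal_for P X G i -> (countable_fan_tightness G <-> discrete X).
Proof.
  intros Psup Pdisc PG Hu; split.
  - intros cft; apply NNPP; intros Hnd.
    exact (universal_not_fan_tight P X hX G i Psup Hu Hnd cft).
  - intros Hd; apply discrete_countable_fan_tightness.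
    exact (universal_discrete P X G i Pdisc PG Hu Hd).
Qed.

Theorem theorem3p8 (X : TopSpace) (hX : tychonoff X) :
  (forall (G : TopGroup) (i : X -> G), is_free_topological_group X G i ->
     (countable_fan_tightness G <-> discrete X)) /\
  (forall (G : TopGroup) (i : X -> G), is_free_abelian_topological_group X G i ->
     (countable_fan_tightness G <-> discrete X)).
Proof.
  split.
  - intros G i [ci univ].
    apply (universal_fan_tightness_iff (fun _ => True) X hX G i); auto.
    split; auto; intros H f _; exact (univ H f).
  - intros G i [HA Hu].
    apply (universal_fan_tightness_iff abelian X hX G i); auto.
    exact sup_group_abelian.
Qed.
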